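(* For every quasiterm $X$ with $\mathrm{qGood}\;X$ and every varsort $xs$, the set $\{x : \mathrm{var} \mid \mathrm{qFresh}\;xs\;x\;X\}$ has cardinality $|\mathrm{var}|$.
   Context: Fix types $\mathrm{var}$ (variables), $\mathrm{varsort}$ (sorts of variables), $\mathrm{index}$, $\mathrm{bindex}$ (indexes of free and bound arguments) and $\mathrm{opsym}$ (operation symbols). For types $\alpha,\beta$, $(\alpha,\beta)\,\mathrm{input}$ is the type of partial functions $\alpha\to\beta\;\mathrm{option}$ (values $\mathrm{None}$ or $\mathrm{Some}\;b$); $\mathrm{dom}\,f=\{i\mid f\,i\neq\mathrm{None}\}$. For a predicate $P$ on $\beta$, $\uparrow P\;inp$ holds iff $P\,b$ for all $i$ with $inp\;i=\mathrm{Some}\;b$. Quasiterms and quasiabstractions are the mutually recursive free datatypes $\mathrm{qterm} = \mathrm{qVar}\;\mathrm{varsort}\;\mathrm{var} \mid \mathrm{qOp}\;\mathrm{opsym}\;((\mathrm{index},\mathrm{qterm})\,\mathrm{input})\;((\mathrm{bindex},\mathrm{qabs})\,\mathrm{input})$ and $\mathrm{qabs} = \mathrm{qAbs}\;\mathrm{varsort}\;\mathrm{var}\;\mathrm{qterm}$, where in $\mathrm{qAbs}\;xs\;x\;X$ the variable $x$ of varsort $xs$ is bound in $X$. $\mathrm{qFresh}\;xs\;x\;X$ means that the variable $x$ of varsort $xs$ has no free occurrence in $X$ (i.e. $\mathrm{qFresh}\;xs\;x\;(\mathrm{qVar}\;ys\;y)\iff (xs,x)\neq(ys,y)$; $\mathrm{qFresh}$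 holds for $\mathrm{qOp}\;\delta\;inp\;binp$ iff it holds for all components of $inp$ and $binp$; and it holds for $\mathrm{qAbs}\;ys\;y\;X$ iff $(xs,x)=(ys,y)$ or it holds for $X$). Goodness is defined mutually recursively: $\mathrm{qGood}(\mathrm{qVar}\;xs\;x)$ always; $\mathrm{qGood}(\mathrm{qOp}\;\delta\;inp\;binp)\iff \uparrow\mathrm{qGood}\;inp\wedge\uparrow\mathrm{qGoodAbs}\;binp\wedge|\mathrm{dom}\;inp|<|\mathrm{var}|\wedge|\mathrm{dom}\;binp|<|\mathrm{var}|$; $\mathrm{qGoodAbs}(\mathrm{qAbs}\;xs\;x\;X)\iff\mathrm{qGood}\;X$. Standing assumption: $|\mathrm{var}|$ is an infinite regular cardinal. *)

From Stdlib Require Import Classical.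

Definition card_le (A B : Type) : Prop :=
  exists f : A -> B, forall a1 a2, f a1 = f a2 -> a1 = a2.
Definition card_lt (A B : Type) : Prop := card_le A B /\ ~ card_le B A.
Definition card_eq (A B : Type) : Prop :=
  exists f : A -> B, (forall a1 a2, f a1 = f a2 -> a1 = a2) /\ (forall b, exists a, f a = b).

Definition infinite_type (V : Type) : Prop := card_le nat V.
Definition regular_type (V : Type) : Prop :=
  forall (I : Type) (F : I -> V -> Prop),
    card_lt I V ->
    (forall i, card_lt {x : V | F i x} V) ->
    card_lt {x : V | exists i, F i x} V.

Definition input (A B : Type) : Type := A -> option B.
Definition dom {A B : Type} (f : input A B) : Type := {i : A | f i <> None}.
Definition liftAll {A B : Type} (P : B -> Prop) (inp : input A B) : Prop :=
  forall i b, inp i = Some b -> P b.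

Section Quasi.
Variables (var varsort index bindex opsym : Type).

Inductive qterm : Type :=
| qVar : varsort -> var -> qterm
| qOp : opsym -> (index -> option qterm) -> (bindex -> option qabs) -> qterm
with qabs : Type :=
| qAbs : varsort -> var -> qterm -> qabs.

Fixpoint qFresh (xs : varsort) (x : var) (X : qterm) {struct X} : Prop :=
  match X with
  | qVar ys y => (xs, x) <> (ys, y)
  | qOp _ inp binp =>
      (forall i, match inp i with Some Y => qFresh xs x Y | None => True end) /\
      (forall i, match binp i with Some A => qFreshAbs xs x A | None => True end)
  end
with qFreshAbs (xs : varsort) (x : var) (A : qabs) {struct A} : Prop :=
  match A with
  | qAbs ys y Y => (xs, x) = (ys, y) \/ qFresh xs x Y
  end.

Fixpoint qGood (X : qterm) : Prop :=
  match X with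
  | qVar _ _ => True
  | qOp _ inp binp =>
      (forall i, match inp i with Some Y => qGood Y | None => True end) /\
      (forall i, match binp i with Some A => qGoodAbs A | None => True end) /\
      card_lt (dom inp) var /\ card_lt (dom binp) var
  end
with qGoodAbs (A : qabs) : Prop :=
  match A with
  | qAbs _ _ Y => qGood Y
  end.

(* sanity: the inline "match" clauses are exactly the uparrow lifting *)
Lemma qGood_qOp (d : opsym) inp binp :
  qGood (qOp d inp binp) <->
  liftAll qGood inp /\ liftAll qGoodAbs binp /\
  card_lt (dom inp) var /\ card_lt (dom binp) var.
Proof.
  simpl; unfold liftAll; split.
  - intros [H1 [H2 H3]]; split; [|split]; auto.
    + intros i b E; specialize (H1 i); rewrite E in H1; exact H1.
    + intros i b E; specialize (H2 i); rewrite E in H2; exact H2.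
  - intros [H1 [H2 H3]]; split; [|split]; auto.
    + intros i; specialize (H1 i); destruct (inp i); auto.
    + intros i; specialize (H2 i); destruct (binp i); auto.
Qed.
End Quasi.

Arguments qVar {var varsort index bindex opsym}.
Arguments qOp {var varsort index bindex opsym}.
Arguments qAbs {var varsort index bindex opsym}.
Arguments qFresh {var varsort index bindex opsym}.
Arguments qFreshAbs {var varsort index bindex opsym}.
Arguments qGood {var varsort index bindex opsym}.
Arguments qGoodAbs {var varsort index bindex opsym}.

(* The variables occurring free in a good quasiterm form a set of size less
   than |var|: a variable contributes one, and an operation collects the free
   variables of fewer than |var| arguments, each having fewer than |var| of
   them, so regularity of |var| bounds the union.  Since |var| is infinite,
   the complement of a small set still has cardinality |var|. *)

From Stdlib Require Import Classical ClassicalEpsilon.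

Lemma proj1_sig_inj {A : Type} {P : A -> Prop} (u v : {x | P x}) :
  proj1_sig u = proj1_sig v -> u = v.
Proof. apply eq_sig_hprop; intros; apply proof_irrelevance. Qed.

Lemma card_le_trans {A B C : Type} : card_le A B -> card_le B C -> card_le A C.
Proof.
  intros [f Hf] [g Hg]; exists (fun a => g (f a)); auto.
Qed.

Lemma card_le_sig (A : Type) (P : A -> Prop) : card_le {x | P x} A.
Proof. exists (@proj1_sig _ _); apply proj1_sig_inj. Qed.

Lemma not_card_le_nat_bool : ~ card_le nat bool.
Proof.
  intros [f Hf].
  pose proof (Hf 0 1); pose proof (Hf 0 2); pose proof (Hf 1 2).
  destruct (f 0), (f 1), (f 2); intuition discriminate.
Qed.

Fixpoint sb_layer {A B : Type} (f : A -> B) (g : B -> A) (n : nat) (a : A) : Prop :=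
  match n with
  | O => ~ exists b, g b = a
  | S m => exists a', sb_layer f g m a' /\ g (f a') = a
  end.

(* Schröder–Bernstein: follow [f] on the chains starting outside the range
   of [g], and [g^-1] everywhere else. *)
Lemma card_le_antisym (A B : Type) : card_le A B -> card_le B A -> card_eq A B.
Proof.
  intros [f Hf] [g Hg].
  set (C := fun a => exists n, sb_layer f g n a).
  assert (g_inv : forall a, ~ C a -> {b | g b = a}).
  { intros a Ha; apply constructive_indefinite_description.
    apply NNPP; intro Hn; apply Ha; exists 0; exact Hn. }
  assert (C_step : forall a, C a -> C (g (f a))).
  { intros a [n Hn]; exists (S n), a; auto. }
  set (h := fun a => match excluded_middle_informative (C a) with
                     | left _ => f a
                     | right H => proj1_sig (g_inv a H) end).
  exists h; split.
  - intros a1 a2; unfold h.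
    destruct (excluded_middle_informative (C a1)) as [H1|H1];
    destruct (excluded_middle_informative (C a2)) as [H2|H2].
    + apply Hf.
    + destruct (g_inv a2 H2) as [b2 <-]; cbn; intros <-.
      contradiction (H2 (C_step _ H1)).
    + destruct (g_inv a1 H1) as [b1 <-]; cbn; intros ->.
      contradiction (H1 (C_step _ H2)).
    + destruct (g_inv a1 H1) as [b1 <-], (g_inv a2 H2) as [b2 <-]; cbn.
      intros ->; reflexivity.
  - intro b; destruct (classic (C (g b))) as [[[|n] Hn]|Hn].
    + contradiction Hn; exists b; reflexivity.
    + destruct Hn as [a [Ha E]]; exists a; unfold h.
      destruct (excluded_middle_informative (C a)) as [_|H].
      * apply Hg, E.
      * contradiction H; exists n; exact Ha.
    + exists (g b); unfold h.
      destruct (excluded_middle_informative (C (g b))) as [H|H]; [contradiction|].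
      destruct (g_inv (g b) H) as [b' E]; apply Hg, E.
Qed.

Section SmallSubsets.

Variable V : Type.
Hypothesis V_infinite : infinite_type V.
Hypothesis V_regular : regular_type V.

Lemma card_lt_sig_weaken (P Q : V -> Prop) :
  (forall x, P x -> Q x) -> card_lt {x | Q x} V -> card_lt {x | P x} V.
Proof.
  intros PQ [_ HQ]; split; [apply card_le_sig|].
  intro HV; apply HQ, (card_le_trans HV).
  exists (fun p => exist Q (proj1_sig p) (PQ _ (proj2_sig p))).
  intros p1 p2 E; apply proj1_sig_inj; exact (f_equal (@proj1_sig _ _) E).
Qed.

Lemma card_lt_sig_empty (P : V -> Prop) :
  (forall x, ~ P x) -> card_lt {x | P x} V.
Proof.
  intros HP; split; [apply card_le_sig|].
  destruct V_infinite as [f _]; intros [g _].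
  exact (HP _ (proj2_sig (g (f 0)))).
Qed.

Lemma card_lt_sig_eq (y : V) : card_lt {x | x = y} V.
Proof.
  split; [apply card_le_sig|]; intro HV.
  apply not_card_le_nat_bool, (card_le_trans V_infinite), (card_le_trans HV).
  exists (fun _ => true); intros [x1 <-] [x2 <-] _; apply proj1_sig_inj; reflexivity.
Qed.

Lemma card_lt_bool : card_lt bool V.
Proof.
  destruct V_infinite as [f Hf]; split.
  - exists (fun b : bool => if b then f 0 else f 1).
    intros [|] [|] E; auto; apply Hf in E; discriminate.
  - intro HV; exact (not_card_le_nat_bool (card_le_trans V_infinite HV)).
Qed.

Lemma card_lt_sig_or (P Q : V -> Prop) :
  card_lt {x | P x} V -> card_lt {x | Q x} V -> card_lt {x | P x \/ Q x} V.
Proof.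
  intros HP HQ.
  apply (card_lt_sig_weaken _ (fun x => exists b : bool, (if b then P else Q) x)).
  - intros x [H|H]; [exists true|exists false]; exact H.
  - apply V_regular; [exact card_lt_bool|]; intros [|]; assumption.
Qed.

Lemma card_lt_sig_input_union (I B : Type) (inp : input I B) (S : B -> V -> Prop) :
  card_lt (dom inp) V ->
  (forall i b, inp i = Some b -> card_lt {x | S b x} V) ->
  card_lt {x | exists i b, inp i = Some b /\ S b x} V.
Proof.
  intros Hdom HS.
  apply (card_lt_sig_weaken _
    (fun x => exists i : dom inp, exists b, inp (proj1_sig i) = Some b /\ S b x)).
  - intros x (i & b & E & Hx).
    exists (exist _ i (ltac:(congruence) : inp i <> None)), b; auto.
  - apply V_regular; [exact Hdom|]; intros [i Hi]; cbn.
    destruct (inp i) as [b|] eqn:E.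
    + apply (card_lt_sig_weaken _ (S b)); [|exact (HS i b E)].
      intros x (b' & [= <-] & Hx); exact Hx.
    + apply card_lt_sig_empty; intros x (b & [=] & _).
Qed.

Lemma card_eq_sig_of_card_lt_compl (P : V -> Prop) :
  card_lt {x | ~ P x} V -> card_eq {x | P x} V.
Proof.
  intros Hcompl; apply card_le_antisym; [apply card_le_sig|].
  apply NNPP; intro HP.
  assert (Hall : card_lt {x | P x \/ ~ P x} V).
  { apply card_lt_sig_or; [split; [apply card_le_sig|exact HP]|exact Hcompl]. }
  apply (proj2 Hall); exists (fun x => exist _ x (classic (P x))).
  intros x1 x2 E; exact (f_equal (@proj1_sig _ _) E).
Qed.

End SmallSubsets.

Lemma liftAll_of_match {A B : Type} {P : B -> Prop} {inp : input A B} :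
  (forall i, match inp i with Some b => P b | None => True end) -> liftAll P inp.
Proof. intros H i b E; specialize (H i); rewrite E in H; exact H. Qed.

Section Quasiterms.

Variables var varsort index bindex opsym : Type.
Notation qterm := (qterm var varsort index bindex opsym).
Notation qabs := (qabs var varsort index bindex opsym).

Section Induction.

Variables (P : qterm -> Prop) (Q : qabs -> Prop).
Hypothesis P_qVar : forall ys y, P (qVar ys y).
Hypothesis P_qOp : forall d inp binp,
  liftAll P inp -> liftAll Q binp -> P (qOp d inp binp).
Hypothesis Q_qAbs : forall ys y Y, P Y -> Q (qAbs ys y Y).

Fixpoint qterm_nested_ind (X : qterm) : P X :=
  match X with
  | qVar ys y => P_qVar ys y
  | qOp d inp binp =>
      P_qOp d inp binp
        (liftAll_of_match (fun i =>
           match inp i as o return match o with Some Y => P Y | None => True end with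
           | Some Y => qterm_nested_ind Y
           | None => I
           end))
        (liftAll_of_match (fun i =>
           match binp i as o return match o with Some A => Q A | None => True end with
           | Some A => qabs_nested_ind A
           | None => I
           end))
  end
with qabs_nested_ind (A : qabs) : Q A :=
  match A with
  | qAbs ys y Y => Q_qAbs ys y Y (qterm_nested_ind Y)
  end.

End Induction.

Lemma not_qFresh_qVar xs x ys y : ~ qFresh xs x (qVar ys y : qterm) -> x = y.
Proof. cbn; intro H; apply NNPP; intro N; apply H; congruence. Qed.

Lemma not_qFresh_qOp xs x d (inp : input index qterm) (binp : input bindex qabs) :
  ~ qFresh xs x (qOp d inp binp) ->
  (exists i Y, inp i = Some Y /\ ~ qFresh xs x Y) \/
  (exists i A, binp i = Some A /\ ~ qFreshAbs xs x A).
Proof.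
  cbn; intro H; apply NNPP; intro N; apply H; split; intro i.
  - destruct (inp i) as [Y|] eqn:E; [|exact I].
    apply NNPP; intro HY; apply N; left; exists i, Y; auto.
  - destruct (binp i) as [A|] eqn:E; [|exact I].
    apply NNPP; intro HA; apply N; right; exists i, A; auto.
Qed.

Lemma card_lt_not_qFresh (xs : varsort) :
  infinite_type var -> regular_type var ->
  forall X : qterm, qGood X -> card_lt {x : var | ~ qFresh xs x X} var.
Proof.
  intros var_inf var_reg.
  apply (qterm_nested_ind
    (fun X => qGood X -> card_lt {x | ~ qFresh xs x X} var)
    (fun A => qGoodAbs A -> card_lt {x | ~ qFreshAbs xs x A} var)).
  - intros ys y _.
    apply (card_lt_sig_weaken _ _ (fun x => x = y)); [intro; apply not_qFresh_qVar|].
    apply card_lt_sig_eq, var_inf.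
  - intros d inp binp IHinp IHbinp (Ginp & Gbinp & Hinp & Hbinp)%qGood_qOp.
    eapply card_lt_sig_weaken; [intro; apply not_qFresh_qOp|].
    apply card_lt_sig_or; [exact var_inf|exact var_reg| |];
      apply card_lt_sig_input_union; auto.
    + intros i Y E; exact (IHinp i Y E (Ginp i Y E)).
    + intros i A E; exact (IHbinp i A E (Gbinp i A E)).
  - intros ys y Y IH HY.
    apply (card_lt_sig_weaken _ _ (fun x => ~ qFresh xs x Y)); [|exact (IH HY)].
    intros x H N; apply H; right; exact N.
Qed.

End Quasiterms.

Theorem proposition1 (var varsort index bindex opsym : Type)
  (var_inf : infinite_type var) (var_reg : regular_type var)
  (X : qterm var varsort index bindex opsym) (xs : varsort) :
  qGood X ->
  card_eq {x : var | qFresh xs x X} var.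
Proof.
  intros HX.
  apply (card_eq_sig_of_card_lt_compl _ var_inf var_reg).
  now apply card_lt_not_qFresh.
Qed.
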